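(* Let $f=f(u)$ be smooth and suppose $\Sigma=\{u\in\mathbb{R}: f(u)=u\}$ is nonempty and finite, with smallest element $u_1^*$ and largest element $u_N^*$, and assume $f'(u_1^* )<1$ and $f'(u_N^* )<1$. Let $(\rho,u)$ be a classical solution of $(S_f)$ on $[0,T)$ with $\rho\ge0$. Then for all $t\in[0,T)$ and $x\in\mathbb{R}$, $$\min\{\inf u_0,u_1^*\}\le u(t,x)\le\max\{\sup u_0,u_N^*\}.$$ In particular, if $\Sigma=\{u^*\}$ with $f'(u^* )<1$, then $\min\{\inf u_0,u^*\}\le u(t,x)\le\max\{\sup u_0,u^*\}$.
   Context: When $f$ depends on $u$ only, system $(S_f)$ is: $\rho_t+(\rho f(u))_x=0$, $u_t+uu_x=\rho\,(f(u)-u)$ for $x\in\mathbb{R}$, $t>0$, with $\rho(0,x)=\rho_0(x)\ge0$, $u(0,x)=u_0(x)$, where $u_0$ is bounded. A classical solution on $[0,T)$ is a pair $\rho,u\in C^1([0,T)\times\mathbb{R})$ satisfying the equations pointwise and the initial data, such that $\rho,u,\rho_x,u_x$ are bounded on $[0,t]\times\mathbb{R}$ for every $t<T$. *)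

From Stdlib Require Import Reals Lra List.
From Coquelicot Require Import Coquelicot.
Open Scope R_scope.

Definition smooth (f : R -> R) : Prop :=
  forall (n : nat) (x : R), ex_derive (Derive_n f n) x.

Definition cont_on_strip (T : R) (g : R -> R -> R) : Prop :=
  forall t x, 0 <= t < T ->
  forall eps, 0 < eps -> exists delta, 0 < delta /\
    forall s y, 0 <= s < T -> Rabs (s - t) < delta -> Rabs (y - x) < delta ->
      Rabs (g s y - g t x) < eps.

Definition bounded_on_slab (t : R) (g : R -> R -> R) : Prop :=
  exists M, forall s x, 0 <= s <= t -> Rabs (g s x) <= M.

(* Classical solution of (S_f) on [0,T) with initial data (rho0,u0):
   rho, u are C^1 on [0,T) x R, i.e. they are continuous there and have
   partial derivatives rt = rho_t, rx = rho_x, ut = u_t, ux = u_x which are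
   continuous on [0,T) x R (the t-derivatives at t = 0 being understood as
   the continuous extension of the interior ones); the equations hold
   pointwise for t in (0,T); the initial data hold; and rho, u, rho_x, u_x
   are bounded on [0,t] x R for every t < T. *)
Definition classical_solution (f : R -> R) (T : R)
  (rho0 u0 : R -> R) (rho u : R -> R -> R) : Prop :=
  exists rt rx ut ux : R -> R -> R,
    cont_on_strip T rho /\ cont_on_strip T u /\
    cont_on_strip T rt /\ cont_on_strip T rx /\
    cont_on_strip T ut /\ cont_on_strip T ux /\
    (forall t x, 0 < t < T -> is_derive (fun s => rho s x) t (rt t x)) /\
    (forall t x, 0 < t < T -> is_derive (fun s => u s x) t (ut t x)) /\
    (forall t x, 0 <= t < T -> is_derive (fun y => rho t y) x (rx t x)) /\
    (forall t x, 0 <= t < T -> is_derive (fun y => u t y) x (ux t x)) /\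
    (* rho_t + (rho f(u))_x = 0 *)
    (forall t x, 0 < t < T ->
       is_derive (fun y => rho t y * f (u t y)) x (- rt t x)) /\
    (forall t x, 0 < t < T ->
       ut t x + u t x * ux t x = rho t x * (f (u t x) - u t x)) /\
    (forall x, rho 0 x = rho0 x) /\
    (forall x, u 0 x = u0 x) /\
    (forall t, 0 <= t < T ->
       bounded_on_slab t rho /\ bounded_on_slab t u /\
       bounded_on_slab t rx /\ bounded_on_slab t ux).

Definition inf_fun (g : R -> R) : R := real (Glb_Rbar (fun y => exists x, y = g x)).
Definition sup_fun (g : R -> R) : R := real (Lub_Rbar (fun y => exists x, y = g x)).

(* Along the transport operator d_t + u d_x the equation reads
   u_t + u u_x = rho (f(u) - u) with rho >= 0.  Since u1 and uN are the
   extreme fixed points of f and f'(u1), f'(uN) < 1, the sign of f(v) - v is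
   fixed outside [u1, uN]: positive below u1, negative above uN.  Hence above
   any K >= uN the function u is a subsolution (u_t + u u_x <= 0) and cannot
   exceed K if it starts below K; symmetrically from below. *)

From Stdlib Require Import Reals List.
From Coquelicot Require Import Coquelicot.
From Stdlib Require Import Lra Classical.
Open Scope R_scope.

Lemma is_derive_continuity_pt (g : R -> R) (x l : R) :
  is_derive g x l -> continuity_pt g x.
Proof.
  intros Hd. apply derivable_continuous_pt. exists l. now apply is_derive_Reals.
Qed.

Lemma derive_nonneg_at_left_max (g : R -> R) (t l eta : R) :
  is_derive g t l -> 0 < eta ->
  (forall s, t - eta < s < t -> g s <= g t) -> 0 <= l.
Proof.
  intros Hd Heta Hmax. apply is_derive_Reals in Hd.
  apply Rnot_lt_le; intros Hl.
  destruct (Hd (- l)) as [del Hdel]; [lra|].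
  set (h := - Rmin del eta / 2).
  assert (Hpos : 0 < Rmin del eta) by (apply Rmin_pos; [apply cond_pos | lra]).
  pose proof (Rmin_l del eta); pose proof (Rmin_r del eta).
  assert (Hhneg : h < 0) by (unfold h; lra).
  assert (Hh : Rabs h < del) by (rewrite Rabs_left; unfold h in *; lra).
  specialize (Hdel h (Rlt_not_eq _ _ Hhneg) Hh).
  assert (Hg : g (t + h) <= g t) by (apply Hmax; unfold h in *; lra).
  assert (Hq : 0 <= (g (t + h) - g t) / h).
  { replace ((g (t + h) - g t) / h) with ((g t - g (t + h)) / (- h))
      by (field; apply Rlt_not_eq; exact Hhneg).
    apply Rdiv_le_0_compat; lra. }
  apply Rabs_def2 in Hdel. lra.
Qed.

(* Mirror image of the previous lemma, obtained through s |-> -s: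
   a maximum from the right forces g'(t) <= 0. *)
Lemma derive_nonpos_at_right_max (g : R -> R) (t l eta : R) :
  is_derive g t l -> 0 < eta ->
  (forall s, t < s < t + eta -> g s <= g t) -> l <= 0.
Proof.
  intros Hd Heta Hmax.
  assert (Hrefl : is_derive (fun s => g (- s)) (- t) (- l)).
  { assert (Hopp : is_derive (fun s : R => - s) (- t) (-1)) by (auto_derive; auto; ring).
    rewrite <- Ropp_involutive in Hd at 1.
    pose proof (is_derive_comp g (fun s => - s) (- t) l (-1) Hd Hopp) as Hc.
    replace (- l) with (scal (-1) l) by (unfold scal; simpl; unfold mult; simpl; ring).
    exact Hc. }
  enough (0 <= - l) by lra.
  apply (derive_nonneg_at_left_max _ _ _ eta Hrefl Heta).
  intros s Hs. rewrite Ropp_involutive. apply Hmax. lra.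
Qed.

Lemma derive_zero_at_max (g : R -> R) (x l : R) :
  is_derive g x l -> (forall y, g y <= g x) -> l = 0.
Proof.
  intros Hd Hmax.
  pose proof (derive_nonneg_at_left_max g x l 1 Hd Rlt_0_1 (fun y _ => Hmax y)).
  pose proof (derive_nonpos_at_right_max g x l 1 Hd Rlt_0_1 (fun y _ => Hmax y)).
  lra.
Qed.

Lemma same_sign_without_zeros (g : R -> R) (a b : R) :
  continuity g -> a <= b -> (forall z, a <= z <= b -> g z <> 0) -> 0 < g a * g b.
Proof.
  intros Hc Hab Hnz. apply Rnot_le_lt; intros Hle.
  destruct (IVT_cor g a b Hc Hab Hle) as [z [Hz Hgz]].
  exact (Hnz z Hz Hgz).
Qed.

(* If uN is the largest fixed point of f and f'(uN) < 1, then f(v) < v for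
   v > uN: otherwise f - id would stay positive on (uN, v], so uN would be a
   right minimum of f - id and f'(uN) - 1 >= 0. *)
Lemma fixed_points_above (f : R -> R) (uN d : R) :
  continuity f -> is_derive f uN d -> d < 1 -> f uN = uN ->
  (forall v, f v = v -> v <= uN) -> forall v, uN < v -> f v < v.
Proof.
  intros Hc Hd Hd1 Hfix Hmax v Hv.
  set (g := fun w => f w - w).
  assert (Hgc : continuity g)
    by (apply continuity_minus; [exact Hc | apply derivable_continuous, derivable_id]).
  assert (Hnz : forall z, uN < z -> g z <> 0).
  { intros z Hz Hgz. assert (z <= uN) by (apply Hmax; unfold g in Hgz; lra). lra. }
  apply Rnot_le_lt; intros Hfv.
  assert (Hgv : 0 < g v).
  { destruct (Rle_lt_or_eq_dec 0 (g v)) as [|Heq]; [unfold g; lra | assumption |].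
    exfalso. exact (Hnz v Hv (eq_sym Heq)). }
  assert (Hmin : forall s, uN < s < uN + (v - uN) -> - g s <= - g uN).
  { intros s Hs.
    pose proof (same_sign_without_zeros g s v Hgc ltac:(lra)
                  (fun z Hz => Hnz z ltac:(lra))).
    assert (g uN = 0) by (unfold g; lra). nra. }
  assert (Hdg : is_derive (fun s => - g s) uN (- (d - 1))).
  { apply is_derive_Reals, (derivable_pt_lim_opp g), derivable_pt_lim_minus.
    - now apply is_derive_Reals.
    - apply derivable_pt_lim_id. }
  pose proof (derive_nonpos_at_right_max _ _ _ (v - uN) Hdg ltac:(lra) Hmin). lra.
Qed.

Lemma fixed_points_below (f : R -> R) (u1 d : R) :
  continuity f -> is_derive f u1 d -> d < 1 -> f u1 = u1 ->
  (forall v, f v = v -> u1 <= v) -> forall v, v < u1 -> v < f v.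
Proof.
  intros Hc Hd Hd1 Hfix Hmin v Hv.
  set (g := fun w => f w - w).
  assert (Hgc : continuity g)
    by (apply continuity_minus; [exact Hc | apply derivable_continuous, derivable_id]).
  assert (Hnz : forall z, z < u1 -> g z <> 0).
  { intros z Hz Hgz. assert (u1 <= z) by (apply Hmin; unfold g in Hgz; lra). lra. }
  apply Rnot_le_lt; intros Hfv.
  assert (Hgv : g v < 0).
  { destruct (Rle_lt_or_eq_dec (g v) 0) as [|Heq]; [unfold g; lra | assumption |].
    exfalso. exact (Hnz v Hv Heq). }
  assert (Hmax : forall s, u1 - (u1 - v) < s < u1 -> g s <= g u1).
  { intros s Hs.
    pose proof (same_sign_without_zeros g v s Hgc ltac:(lra)
                  (fun z Hz => Hnz z ltac:(lra))).
    assert (g u1 = 0) by (unfold g; lra). nra. }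
  assert (Hdg : is_derive g u1 (d - 1)).
  { apply is_derive_Reals, derivable_pt_lim_minus.
    - now apply is_derive_Reals.
    - apply derivable_pt_lim_id. }
  pose proof (derive_nonneg_at_left_max _ _ _ (u1 - v) Hdg ltac:(lra) Hmax). lra.
Qed.

Section TimeLipschitz.

Variables (h dh : R -> R) (t0 Lt : R).
Hypothesis Hderiv : forall r, 0 < r <= t0 -> is_derive h r (dh r).
Hypothesis Hbound : forall r, 0 < r <= t0 -> Rabs (dh r) <= Lt.

Lemma lipschitz_away_from_zero (s t : R) :
  0 < s <= t0 -> 0 < t <= t0 -> Rabs (h s - h t) <= Lt * Rabs (s - t).
Proof.
  intros Hs Ht.
  assert (Hin : forall x, Rmin t s <= x <= Rmax t s -> 0 < x <= t0).
  { intros x Hx.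
    assert (0 < Rmin t s) by (apply Rmin_glb_lt; lra).
    assert (Rmax t s <= t0) by (apply Rmax_lub; lra). lra. }
  destruct (MVT_gen h t s dh) as [c [Hc Heq]].
  - intros x Hx. apply Hderiv, Hin. lra.
  - intros x Hx. apply (is_derive_continuity_pt _ _ (dh x)), Hderiv, Hin, Hx.
  - rewrite Heq, Rabs_mult. apply Rmult_le_compat_r; [apply Rabs_pos |].
    apply Hbound, Hin, Hc.
Qed.

Hypothesis HLt : 0 <= Lt.
Hypothesis Hcont0 : forall eps, 0 < eps -> exists del, 0 < del /\
  forall r, 0 <= r <= t0 -> r < del -> Rabs (h r - h 0) < eps.

(* The estimate passes to the endpoint 0 by right continuity. *)
Lemma lipschitz_from_zero (t : R) :
  0 < t <= t0 -> Rabs (h 0 - h t) <= Lt * t.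
Proof.
  intros Ht. apply Rle_plus_epsilon. intros eps Heps.
  destruct (Hcont0 eps Heps) as [del [Hdel Hclose]].
  set (r := Rmin (del / 2) t).
  assert (Hr : 0 < r <= t) by (split; [apply Rmin_pos; lra | apply Rmin_r]).
  assert (Hrdel : r < del) by (pose proof (Rmin_l (del / 2) t); unfold r in *; lra).
  pose proof (Hclose r ltac:(lra) Hrdel) as Hnear.
  pose proof (lipschitz_away_from_zero r t ltac:(lra) Ht) as Hfar.
  rewrite (Rabs_left1 (r - t)) in Hfar by lra.
  pose proof (Rabs_triang (h 0 - h r) (h r - h t)) as Htri.
  replace (h 0 - h r + (h r - h t)) with (h 0 - h t) in Htri by ring.
  rewrite Rabs_minus_sym in Hnear.
  assert (Lt * - (r - t) <= Lt * t) by (apply Rmult_le_compat_l; lra).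
  lra.
Qed.

Lemma lipschitz_in_time (s t : R) :
  0 <= s <= t0 -> 0 <= t <= t0 -> Rabs (h s - h t) <= Lt * Rabs (s - t).
Proof.
  intros Hs Ht.
  destruct (Req_dec s 0) as [-> | Hs0]; destruct (Req_dec t 0) as [-> | Ht0].
  - rewrite !Rminus_diag, Rabs_R0. lra.
  - rewrite Rminus_0_l, Rabs_Ropp, (Rabs_right t) by lra. apply lipschitz_from_zero. lra.
  - rewrite Rabs_minus_sym, Rminus_0_r, (Rabs_right s) by lra. apply lipschitz_from_zero. lra.
  - apply lipschitz_away_from_zero; lra.
Qed.

End TimeLipschitz.

Lemma small_positive_multiplier (p q : R) :
  0 <= p -> 0 < q -> exists e, 0 < e /\ e * p <= q.
Proof.
  intros Hp Hq. exists (q / (p + 1)).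
  assert (He : 0 < q / (p + 1)) by (apply Rdiv_lt_0_compat; lra).
  split; [exact He |].
  replace (q / (p + 1) * p) with (q - q / (p + 1)) by (field; lra). lra.
Qed.

Section FirstTouch.

Variables (v : R -> R -> R) (t0 K Lv L : R).
Hypothesis HLv : 0 <= Lv.
Hypothesis Hinit : forall x, v 0 x < K.
Hypothesis Hlip : forall s t x, 0 <= s <= t0 -> 0 <= t <= t0 ->
  Rabs (v s x - v t x) <= Lv * Rabs (s - t).
Hypothesis Hcont : forall t x, 0 <= t <= t0 -> continuity_pt (v t) x.
Hypothesis Htail : forall t x, 0 <= t <= t0 -> L < Rabs x -> v t x <= K.

Definition below_until (t : R) : Prop := forall s x, 0 <= s <= t -> v s x <= K.

Lemma below_until_closed (t : R) :
  0 <= t <= t0 -> (forall s x, 0 <= s < t -> v s x <= K) -> below_until t.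
Proof.
  intros Ht Hbefore s x Hs.
  destruct (Rlt_or_le s t) as [Hlt | Hge]; [apply Hbefore; lra |].
  replace s with t by lra. clear s Hs Hge.
  destruct (Req_dec t 0) as [-> | Ht0]; [apply Rlt_le, Hinit |].
  apply Rle_plus_epsilon. intros eps Heps.
  destruct (small_positive_multiplier Lv eps HLv Heps) as [e [He HeLv]].
  set (r := t - Rmin t e).
  assert (Hmin : 0 < Rmin t e <= e) by (split; [apply Rmin_pos; lra | apply Rmin_r]).
  assert (Hr : 0 <= r < t) by (pose proof (Rmin_l t e); unfold r; lra).
  pose proof (Hbefore r x Hr) as Hvr.
  pose proof (Hlip t r x Ht ltac:(lra)) as Hstep.
  rewrite (Rabs_right (t - r)) in Hstep by lra.
  apply Rabs_le_between in Hstep.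
  assert (Lv * (t - r) <= Lv * e) by (apply Rmult_le_compat_l; unfold r; lra).
  lra.
Qed.

(* If v(t, .) < K everywhere, staying below K persists a little beyond t:
   on [-|L|, |L|] the maximum of v(t, .) leaves a gap, which the Lipschitz
   bound preserves for a short time, and |x| > L is handled by the tail
   hypothesis. *)
Lemma below_until_extends (t : R) :
  0 <= t < t0 -> below_until t -> (forall x, v t x < K) ->
  exists t', t < t' <= t0 /\ below_until t'.
Proof.
  intros Ht Hbelow Hstrict.
  pose proof (Rabs_pos L) as HL.
  destruct (continuity_ab_maj (v t) (- Rabs L) (Rabs L)) as [m [Hm _]];
    [lra | intros y _; apply Hcont; lra |].
  set (gap := K - v t m).
  assert (Hgap : 0 < gap) by (unfold gap; pose proof (Hstrict m); lra).
  destruct (small_positive_multiplier Lv gap HLv Hgap) as [e [He HeLv]].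
  assert (Hstep : 0 < Rmin (t0 - t) e <= e) by (split; [apply Rmin_pos; lra | apply Rmin_r]).
  exists (t + Rmin (t0 - t) e).
  split; [pose proof (Rmin_l (t0 - t) e); lra |].
  intros s x Hs.
  destruct (Rle_or_lt s t) as [Hst | Hst]; [apply Hbelow; lra |].
  pose proof (Rmin_l (t0 - t) e).
  destruct (Rle_or_lt (Rabs x) (Rabs L)) as [Hx | Hx].
  - apply Rabs_le_between in Hx.
    pose proof (Hm x Hx) as Hvx.
    pose proof (Hlip s t x ltac:(lra) ltac:(lra)) as Hclose.
    rewrite (Rabs_right (s - t)) in Hclose by lra.
    apply Rabs_le_between in Hclose.
    assert (Lv * (s - t) <= Lv * e) by (apply Rmult_le_compat_l; lra).
    unfold gap in *. lra.
  - apply Htail; [lra |]. pose proof (Rle_abs L). lra.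
Qed.

(* The supremum t1 of the times up to which v stays below K is such a
   first touching time. *)
Lemma first_touch (x0 : R) :
  0 <= t0 -> K < v t0 x0 ->
  exists t1 x1, 0 < t1 <= t0 /\ v t1 x1 = K /\ below_until t1.
Proof.
  intros Ht0 Hx0.
  set (S := fun s => 0 <= s <= t0 /\ below_until s).
  assert (HS0 : S 0).
  { split; [lra |]. intros s x Hs. replace s with 0 by lra. apply Rlt_le, Hinit. }
  destruct (completeness S) as [t1 [Hub Hlub]].
  { exists t0. intros s [Hs _]. lra. }
  { exists 0. exact HS0. }
  assert (Ht1 : 0 <= t1 <= t0).
  { split; [apply Hub, HS0 | apply Hlub; intros s [Hs _]; lra]. }
  assert (Hbefore : forall s x, 0 <= s < t1 -> v s x <= K).
  { intros s x Hs. apply Rnot_lt_le. intros Hvsx.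
    enough (t1 <= s) by lra.
    apply Hlub. intros w [Hw Hbw].
    apply Rnot_lt_le. intros Hsw. pose proof (Hbw s x ltac:(lra)). lra. }
  assert (Hbt1 : below_until t1) by (apply below_until_closed; assumption).
  assert (Ht1t0 : t1 < t0).
  { destruct (Rle_lt_or_eq_dec t1 t0 (proj2 Ht1)) as [| Heq]; [assumption |].
    rewrite Heq in Hbt1. pose proof (Hbt1 t0 x0 ltac:(lra)). lra. }
  destruct (classic (exists x1, K <= v t1 x1)) as [[x1 Hx1] | Hnone].
  - exists t1, x1.
    assert (Heq : v t1 x1 = K) by (pose proof (Hbt1 t1 x1 ltac:(lra)); lra).
    split; [| split; assumption].
    split; [| lra].
    destruct (Rle_lt_or_eq_dec 0 t1 (proj1 Ht1)) as [| Hz]; [assumption |].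
    rewrite <- Hz in Heq. pose proof (Hinit x1). lra.
  - assert (Hstrict : forall x, v t1 x < K).
    { intros x. apply Rnot_le_lt. intros Hx. apply Hnone. exists x. exact Hx. }
    destruct (below_until_extends t1 ltac:(lra) Hbt1 Hstrict) as [t' [Ht' Hbt']].
    assert (HSt' : S t') by (split; [lra | exact Hbt']).
    pose proof (Hub t' HSt'). lra.
Qed.

End FirstTouch.

(* The quantitative heart of the penalization: at a touching point we get
   eps <= -c u_x = -c 2 delta y with delta y^2 <= A, which contradicts the
   choice delta * 4 (Bc^2 + 1) (A + 1) <= eps^2 since |c| <= Bc. *)
Lemma penalty_too_small (eps delta Bc A y cv : R) :
  0 < eps -> 0 < delta -> Rabs cv <= Bc -> delta * (y * y) <= A ->
  delta * (4 * (Bc * Bc + 1) * (A + 1)) <= eps * eps ->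
  eps + cv * (2 * delta * y) <= 0 -> False.
Proof.
  intros Heps Hdelta Hcv Hy Hchoice Hineq.
  pose proof (Rabs_pos cv) as Hcv0.
  assert (HA : 0 <= A) by nra.
  assert (Hlin : eps <= Bc * (2 * delta * Rabs y)).
  { pose proof (Rle_abs (- (cv * (2 * delta * y)))) as Hle.
    rewrite Rabs_Ropp, !Rabs_mult, (Rabs_right 2), (Rabs_right delta) in Hle by lra.
    pose proof (Rabs_pos y).
    assert (Rabs cv * (2 * delta * Rabs y) <= Bc * (2 * delta * Rabs y)) by
      (apply Rmult_le_compat_r; nra).
    lra. }
  assert (Hsq : eps * eps <= 4 * (Bc * Bc) * delta * (delta * (y * y))).
  { replace (y * y) with (Rabs y * Rabs y) by (rewrite <- Rabs_mult; apply Rabs_right; nra).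
    pose proof (Rabs_pos y).
    replace (4 * (Bc * Bc) * delta * (delta * (Rabs y * Rabs y)))
      with ((Bc * (2 * delta * Rabs y)) * (Bc * (2 * delta * Rabs y))) by ring.
    apply Rmult_le_compat; lra. }
  assert (4 * (Bc * Bc) * delta * (delta * (y * y)) <= 4 * (Bc * Bc) * delta * A)
    by (apply Rmult_le_compat_l; nra).
  nra.
Qed.

Section MaximumPrinciple.

Variables (u ut ux c : R -> R -> R) (t0 K Lt B Bc : R).
Hypothesis Ht0 : 0 <= t0.
Hypothesis Hut : forall t x, 0 < t <= t0 -> is_derive (fun s => u s x) t (ut t x).
Hypothesis Hux : forall t x, 0 <= t <= t0 -> is_derive (fun y => u t y) x (ux t x).
Hypothesis HLt : 0 <= Lt.
Hypothesis Hlip : forall s t x, 0 <= s <= t0 -> 0 <= t <= t0 ->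
  Rabs (u s x - u t x) <= Lt * Rabs (s - t).
Hypothesis HB : forall t x, 0 <= t <= t0 -> Rabs (u t x) <= B.
Hypothesis HBc : forall t x, 0 <= t <= t0 -> Rabs (c t x) <= Bc.
Hypothesis Hinit : forall x, u 0 x <= K.
Hypothesis Hsuper : forall t x, 0 < t <= t0 -> K < u t x -> ut t x + c t x * ux t x <= 0.

(* The penalized function u - eps t - delta x^2: the term -eps t makes the
   touching strict in time, and -delta x^2 pushes it below K at infinity. *)
Definition penalized (eps delta t x : R) : R := u t x - (eps * t + delta * (x * x)).

Lemma penalized_lipschitz (eps delta : R) :
  0 < eps -> forall s t x, 0 <= s <= t0 -> 0 <= t <= t0 ->
  Rabs (penalized eps delta s x - penalized eps delta t x) <= (Lt + eps) * Rabs (s - t).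
Proof.
  intros Heps s t x Hs Ht. unfold penalized.
  replace (u s x - (eps * s + delta * (x * x)) - (u t x - (eps * t + delta * (x * x))))
    with ((u s x - u t x) + - (eps * (s - t))) by ring.
  eapply Rle_trans; [apply Rabs_triang |].
  rewrite Rabs_Ropp, Rabs_mult, (Rabs_right eps) by lra.
  pose proof (Hlip s t x Hs Ht). lra.
Qed.

Lemma penalized_time_derivative (eps delta t x : R) :
  0 < t <= t0 -> is_derive (fun s => penalized eps delta s x) t (ut t x - eps).
Proof.
  intros Ht. unfold penalized.
  apply is_derive_Reals, derivable_pt_lim_minus; [apply is_derive_Reals, Hut, Ht |].
  apply is_derive_Reals. auto_derive; [auto | ring].
Qed.

Lemma penalized_space_derivative (eps delta t x : R) :
  0 <= t <= t0 -> is_derive (penalized eps delta t) x (ux t x - 2 * delta * x).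
Proof.
  intros Ht. unfold penalized.
  apply is_derive_Reals, derivable_pt_lim_minus; [apply is_derive_Reals, Hux, Ht |].
  apply is_derive_Reals. auto_derive; [auto | ring].
Qed.

Lemma penalized_tail (eps delta K' t x : R) :
  0 < eps -> 0 < delta -> 0 <= t <= t0 ->
  (Rabs B + Rabs K') / delta + 1 < Rabs x -> penalized eps delta t x <= K'.
Proof.
  intros Heps Hdelta Ht Hx. unfold penalized.
  set (L0 := (Rabs B + Rabs K') / delta).
  assert (HL0 : delta * L0 = Rabs B + Rabs K') by (unfold L0; field; lra).
  assert (HL0pos : 0 <= L0) by (unfold L0; apply Rdiv_le_0_compat;
                                  [pose proof (Rabs_pos B); pose proof (Rabs_pos K'); lra | lra]).
  assert (Hxx : x * x = Rabs x * Rabs x) by (rewrite <- Rabs_mult; symmetry; apply Rabs_right; nra).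
  assert (Hbig : Rabs B + Rabs K' < delta * (x * x)).
  { rewrite Hxx, <- HL0. apply Rmult_lt_compat_l; [exact Hdelta |].
    fold L0 in Hx. nra. }
  pose proof (HB t x Ht) as Hu. apply Rabs_le_between in Hu.
  pose proof (Rle_abs B). pose proof (Rle_abs (- K')). rewrite Rabs_Ropp in *.
  nra.
Qed.

(* The penalized function cannot touch a level K' >= K from below for the
   first time: there u_t >= eps, u_x = 2 delta x1 and u > K, so the
   transport inequality contradicts the choice of eps and delta. *)
Lemma penalized_no_first_touch (eps delta K' t1 x1 : R) :
  0 < eps -> 0 < delta -> K <= K' ->
  delta * (4 * (Bc * Bc + 1) * (B - K' + 1)) <= eps * eps ->
  0 < t1 <= t0 -> penalized eps delta t1 x1 = K' ->
  below_until (penalized eps delta) K' t1 -> False.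
Proof.
  intros Heps Hdelta HK Hchoice Ht1 Htouch Hbelow.
  assert (Htime : eps <= ut t1 x1).
  { enough (0 <= ut t1 x1 - eps) by lra.
    apply (derive_nonneg_at_left_max _ t1 _ t1 (penalized_time_derivative eps delta t1 x1 Ht1));
      [lra |].
    intros s Hs. rewrite Htouch. apply Hbelow. lra. }
  assert (Hspace : ux t1 x1 = 2 * delta * x1).
  { enough (ux t1 x1 - 2 * delta * x1 = 0) by lra.
    apply (derive_zero_at_max (penalized eps delta t1) x1);
      [apply penalized_space_derivative; lra |].
    intros y. rewrite Htouch. apply Hbelow. lra. }
  assert (Hu : u t1 x1 = K' + (eps * t1 + delta * (x1 * x1))) by (unfold penalized in Htouch; lra).
  assert (Hsq : 0 <= delta * (x1 * x1)) by nra.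
  assert (Hdrift : 0 < eps * t1) by nra.
  assert (Habove : K < u t1 x1) by lra.
  assert (Hbound : delta * (x1 * x1) <= B - K').
  { pose proof (HB t1 x1 ltac:(lra)) as HBt. apply Rabs_le_between in HBt. lra. }
  pose proof (Hsuper t1 x1 Ht1 Habove) as Hsup. rewrite Hspace in Hsup.
  apply (penalty_too_small eps delta Bc (B - K') x1 (c t1 x1)); try assumption.
  - apply HBc. lra.
  - lra.
Qed.

(* If u(t0, x0) exceeded K, the penalized function with eps, delta small
   would exceed K' = K + (u(t0, x0) - K)/4 at time t0, hence touch K' for a
   first time, which is impossible. *)
Theorem maximum_principle : forall x, u t0 x <= K.
Proof.
  intros x0. apply Rnot_lt_le. intros Hx0.
  set (d := u t0 x0 - K).
  assert (Hd : 0 < d) by (unfold d; lra).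
  set (K' := K + d / 4).
  destruct (small_positive_multiplier t0 (d / 4) Ht0 ltac:(lra)) as [eps [Heps Heps_t0]].
  assert (HBK' : K' < B).
  { pose proof (HB t0 x0 ltac:(lra)). pose proof (Rle_abs (u t0 x0)). unfold K', d in *. lra. }
  destruct (small_positive_multiplier (x0 * x0 + 4 * (Bc * Bc + 1) * (B - K' + 1))
              (Rmin (d / 4) (eps * eps)) ltac:(nra)
              ltac:(apply Rmin_pos; nra)) as [delta [Hdelta Hdelta_small]].
  pose proof (Rmin_l (d / 4) (eps * eps)). pose proof (Rmin_r (d / 4) (eps * eps)).
  assert (Hsq0 : 0 <= x0 * x0) by nra.
  assert (Hpos : 0 <= 4 * (Bc * Bc + 1) * (B - K' + 1)) by nra.
  set (L := (Rabs B + Rabs K') / delta + 1).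
  assert (Hstart : forall x, penalized eps delta 0 x < K').
  { intros x. unfold penalized. pose proof (Hinit x).
    assert (0 <= delta * (x * x)) by nra. unfold K'. lra. }
  assert (Hcont : forall t x, 0 <= t <= t0 -> continuity_pt (penalized eps delta t) x).
  { intros t x Ht.
    exact (is_derive_continuity_pt _ _ _ (penalized_space_derivative eps delta t x Ht)). }
  assert (Hpen_pos : 0 <= delta * (4 * (Bc * Bc + 1) * (B - K' + 1))) by nra.
  assert (Hexceed : K' < penalized eps delta t0 x0) by (unfold penalized, K', d in *; nra).
  destruct (first_touch (penalized eps delta) t0 K' (Lt + eps) L ltac:(lra) Hstart
              (penalized_lipschitz eps delta Heps) Hcont
              (fun t x Ht Hx => penalized_tail eps delta K' t x Heps Hdelta Ht Hx)
              x0 Ht0 Hexceed) as (t1 & x1 & Ht1 & Htouch & Hbelow).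
  apply (penalized_no_first_touch eps delta K' t1 x1); try assumption.
  - unfold K'. lra.
  - nra.
Qed.

End MaximumPrinciple.

Lemma le_sup_fun (g : R -> R) (M : R) :
  (forall x, Rabs (g x) <= M) -> forall x, g x <= sup_fun g.
Proof.
  intros HM x. unfold sup_fun.
  destruct (Lub_Rbar_correct (fun y => exists z, y = g z)) as [Hub Hleast].
  pose proof (Hub (g x) (ex_intro _ x eq_refl)) as Hgx.
  assert (Hfin : Rbar_le (Lub_Rbar (fun y => exists z, y = g z)) M).
  { apply Hleast. intros y [z ->]. simpl. apply (Rabs_le_between (g z) M), HM. }
  destruct (Lub_Rbar _); simpl in *; tauto.
Qed.

Lemma inf_fun_le (g : R -> R) (M : R) :
  (forall x, Rabs (g x) <= M) -> forall x, inf_fun g <= g x.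
Proof.
  intros HM x. unfold inf_fun.
  destruct (Glb_Rbar_correct (fun y => exists z, y = g z)) as [Hlb Hgreatest].
  pose proof (Hlb (g x) (ex_intro _ x eq_refl)) as Hgx.
  assert (Hfin : Rbar_le (- M) (Glb_Rbar (fun y => exists z, y = g z))).
  { apply Hgreatest. intros y [z ->]. simpl. apply (Rabs_le_between (g z) M), HM. }
  destruct (Glb_Rbar _); simpl in *; tauto.
Qed.

Section ClassicalSolution.

Variables (f : R -> R) (T : R) (rho0 u0 : R -> R) (rho u : R -> R -> R).
Hypothesis Hsol : classical_solution f T rho0 u0 rho u.
Hypothesis Hfc : continuity f.
Hypothesis Hrho : forall t x, 0 <= t < T -> 0 <= rho t x.

(* On every slab [0, t0] x R with t0 < T, u is bounded and Lipschitz in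
   time: by the equation u_t = rho (f(u) - u) - u u_x, where rho, u, u_x are
   bounded and f is bounded on the range of u. *)
Lemma solution_on_slab (t0 : R) :
  0 <= t0 < T ->
  exists (ut ux : R -> R -> R) (Lt B : R),
    0 <= Lt /\
    (forall t x, 0 < t <= t0 -> is_derive (fun s => u s x) t (ut t x)) /\
    (forall t x, 0 <= t <= t0 -> is_derive (fun y => u t y) x (ux t x)) /\
    (forall s t x, 0 <= s <= t0 -> 0 <= t <= t0 ->
       Rabs (u s x - u t x) <= Lt * Rabs (s - t)) /\
    (forall t x, 0 <= t <= t0 -> Rabs (u t x) <= B) /\
    (forall t x, 0 < t <= t0 ->
       ut t x + u t x * ux t x = rho t x * (f (u t x) - u t x)) /\
    (forall x, u 0 x = u0 x).
Proof.
  intros Ht0.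
  destruct Hsol as (rt & rx & ut & ux & _ & Hcu & _ & _ & _ & _ & _ & Hdut & _ & Hdux & _
                    & Heq & _ & Hinit & Hbd).
  destruct (Hbd t0 Ht0) as [[Br HBr] [[Bu HBu] [_ [Bux HBux]]]].
  assert (Hslab0 : 0 <= 0 <= t0) by lra.
  pose proof (Rle_trans _ _ _ (Rabs_pos _) (HBr 0 0 Hslab0)) as HBr0.
  pose proof (Rle_trans _ _ _ (Rabs_pos _) (HBu 0 0 Hslab0)) as HBu0.
  pose proof (Rle_trans _ _ _ (Rabs_pos _) (HBux 0 0 Hslab0)) as HBux0.
  destruct (continuity_ab_maj (fun w => Rabs (f w)) (- Bu) Bu ltac:(lra)) as [m [Hm _]].
  { intros w _. apply (continuity_pt_comp f Rabs), Rcontinuity_abs. apply Hfc. }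
  set (Lt := Bu * Bux + Br * (Rabs (f m) + Bu)).
  assert (HLt : 0 <= Lt) by (pose proof (Rabs_pos (f m)); unfold Lt; nra).
  assert (Hrate : forall t x, 0 < t <= t0 -> Rabs (ut t x) <= Lt).
  { intros t x Ht.
    assert (Hslab : 0 <= t <= t0) by lra.
    replace (ut t x) with (rho t x * (f (u t x) - u t x) - u t x * ux t x)
      by (specialize (Heq t x ltac:(lra)); lra).
    pose proof (HBr t x Hslab). pose proof (HBu t x Hslab). pose proof (HBux t x Hslab).
    assert (Hf : Rabs (f (u t x)) <= Rabs (f m)) by (apply Hm, Rabs_le_between; auto).
    assert (Hgap : Rabs (f (u t x) - u t x) <= Rabs (f m) + Bu).
    { eapply Rle_trans; [apply Rabs_triang |]. rewrite Rabs_Ropp. lra. }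
    eapply Rle_trans; [apply Rabs_triang |]. rewrite Rabs_Ropp, !Rabs_mult.
    assert (Rabs (rho t x) * Rabs (f (u t x) - u t x) <= Br * (Rabs (f m) + Bu))
      by (apply Rmult_le_compat; auto using Rabs_pos).
    assert (Rabs (u t x) * Rabs (ux t x) <= Bu * Bux)
      by (apply Rmult_le_compat; auto using Rabs_pos).
    unfold Lt. lra. }
  exists ut, ux, Lt, Bu.
  split; [exact HLt |].
  split; [intros t x Ht; apply Hdut; lra |].
  split; [intros t x Ht; apply Hdux; lra |].
  split; [| split; [exact HBu | split; [intros t x Ht; apply Heq; lra | exact Hinit]]].
  intros s t x. apply (lipschitz_in_time (fun r => u r x) (fun r => ut r x)); [| | exact HLt |].
  - intros r Hr. apply Hdut. lra.
  - intros r Hr. apply Hrate, Hr.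
  - intros eps Heps. destruct (Hcu 0 x ltac:(lra) eps Heps) as [del [Hdel Hclose]].
    exists del. split; [exact Hdel |]. intros r Hr Hrdel.
    apply Hclose; [lra | rewrite Rminus_0_r, Rabs_right; lra |].
    rewrite Rminus_diag, Rabs_R0. lra.
Qed.

(* If f(v) <= v above K and u0 <= K, then u <= K: u_t + u u_x <= 0 where
   u > K, so the maximum principle applies with c = u. *)
Lemma solution_upper_bound (K t x : R) :
  (forall y, u0 y <= K) -> (forall w, K < w -> f w <= w) -> 0 <= t < T -> u t x <= K.
Proof.
  intros HK Hsign Ht.
  destruct (solution_on_slab t Ht)
    as (ut & ux & Lt & B & HLt & Hut & Hux & Hlip & HB & Heq & Hinit).
  apply (maximum_principle u ut ux u t K Lt B B); auto; [lra | |].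
  - intros y. rewrite Hinit. apply HK.
  - intros s y Hs Habove. rewrite Heq by exact Hs.
    assert (0 <= rho s y) by (apply Hrho; lra).
    pose proof (Hsign _ Habove). nra.
Qed.

(* If f(v) >= v below K and u0 >= K, then u >= K: apply the maximum
   principle to -u, which satisfies (-u)_t + u (-u)_x <= 0 where u < K. *)
Lemma solution_lower_bound (K t x : R) :
  (forall y, K <= u0 y) -> (forall w, w < K -> w <= f w) -> 0 <= t < T -> K <= u t x.
Proof.
  intros HK Hsign Ht.
  destruct (solution_on_slab t Ht)
    as (ut & ux & Lt & B & HLt & Hut & Hux & Hlip & HB & Heq & Hinit).
  enough (- u t x <= - K) by lra.
  apply (maximum_principle (fun s y => - u s y) (fun s y => - ut s y) (fun s y => - ux s y) u
           t (- K) Lt B B); [lra | | | exact HLt | | | exact HB | |].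
  - intros s y Hs. apply is_derive_Reals, (derivable_pt_lim_opp (fun r => u r y)).
    apply is_derive_Reals, Hut, Hs.
  - intros s y Hs. apply is_derive_Reals, (derivable_pt_lim_opp (fun r => u s r)).
    apply is_derive_Reals, Hux, Hs.
  - intros r s y Hr Hs. replace (- u r y - - u s y) with (- (u r y - u s y)) by ring.
    rewrite Rabs_Ropp. apply Hlip; assumption.
  - intros s y Hs. rewrite Rabs_Ropp. apply HB, Hs.
  - intros y. rewrite Hinit. pose proof (HK y). lra.
  - intros s y Hs Hbelow. pose proof (Heq s y Hs) as Heqs.
    assert (0 <= rho s y) by (apply Hrho; lra).
    pose proof (Hsign (u s y) ltac:(lra)). nra.
Qed.

End ClassicalSolution.

Theorem mainTheorem5
  (f : R -> R) (Hsmooth : smooth f)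
  (Hfinite : exists l : list R, forall v, f v = v <-> In v l)
  (u1 uN : R)
  (Hu1 : f u1 = u1) (HuN : f uN = uN)
  (Hmin : forall v, f v = v -> u1 <= v)
  (Hmax : forall v, f v = v -> v <= uN)
  (Hd1 : Derive f u1 < 1) (HdN : Derive f uN < 1)
  (T : R) (HT : 0 < T)
  (rho0 u0 : R -> R)
  (Hrho0 : forall x, 0 <= rho0 x)
  (Hu0 : exists M, forall x, Rabs (u0 x) <= M)
  (rho u : R -> R -> R)
  (Hsol : classical_solution f T rho0 u0 rho u)
  (Hrho : forall t x, 0 <= t < T -> 0 <= rho t x) :
  forall t x, 0 <= t < T ->
    Rmin (inf_fun u0) u1 <= u t x <= Rmax (sup_fun u0) uN.
Proof.
  intros t x Ht.
  destruct Hu0 as [M HM].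
  assert (Hfd : forall w, is_derive f w (Derive f w)).
  { intros w. apply Derive_correct, (Hsmooth 0%nat w). }
  assert (Hfc : continuity f).
  { intros w. exact (is_derive_continuity_pt f w _ (Hfd w)). }
  split.
  - apply (solution_lower_bound f T rho0 u0 rho u Hsol Hfc Hrho); [| | exact Ht].
    + intros y. pose proof (inf_fun_le u0 M HM y). pose proof (Rmin_l (inf_fun u0) u1). lra.
    + intros w Hw. apply Rlt_le, (fixed_points_below f u1 (Derive f u1)); auto.
      pose proof (Rmin_r (inf_fun u0) u1). lra.
  - apply (solution_upper_bound f T rho0 u0 rho u Hsol Hfc Hrho); [| | exact Ht].
    + intros y. pose proof (le_sup_fun u0 M HM y). pose proof (Rmax_l (sup_fun u0) uN). lra.
    + intros w Hw. apply Rlt_le, (fixed_points_above f uN (Derive f uN)); auto.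
      pose proof (Rmax_r (sup_fun u0) uN). lra.
Qed.
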